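(* Let $n\ge2$, let $A=[a_{kl}]$ be a real $n\times n$ matrix with zero diagonal and $f(\sigma)=\sum_{p=1}^{n-1}\sum_{q=p+1}^n a_{\sigma(p)\sigma(q)}$ its LOP objective function on $\Sigma_n$. For $i\in\{1,\dots,n-1\}$ and $j\in\{1,\dots,n\}$ let $\mu_{ij}=\frac{1}{(n-1)!}\sum_{\sigma:\sigma(i)=j}f(\sigma)$ and $\mu_{i+1\,j}=\frac{1}{(n-1)!}\sum_{\sigma:\sigma(i+1)=j}f(\sigma)$. Then $$\mu_{i+1\,j}-\mu_{ij}=\frac{1}{n-1}\sum_{k\ne j}\bigl(a_{kj}-a_{jk}\bigr).$$
   Context: $\Sigma_n$ is the symmetric group on $\{1,\dots,n\}$; $\sigma(p)$ is the row/column index placed in position $p$. *)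

From HB Require Import structures.
From mathcomp Require Import all_boot all_order all_algebra all_fingroup.
Set Implicit Arguments. Unset Strict Implicit. Unset Printing Implicit Defensive.
Import Order.TTheory GRing.Theory Num.Theory.
Local Open Scope ring_scope.

(* Indices {1..n} are represented 0-based by 'I_n. A permutation s : 'S_n
   places index s p at position p. *)

Definition lop_obj (R : pzRingType) (n : nat) (A : 'M[R]_n) (s : 'S_n) : R :=
  \sum_(p < n) \sum_(q < n | (p < q)%N) A (s p) (s q).

Definition mu (R : fieldType) (n : nat) (A : 'M[R]_n) (i j : 'I_n) : R :=
  ((n.-1)`!%:R)^-1 * \sum_(s : 'S_n | s i == j) lop_obj A s.

From HB Require Import structures.
From mathcomp Require Import all_boot all_order all_algebra all_fingroup.
From mathcomp Require Import zify.
Set Implicit Arguments. Unset Strict Implicit. Unset Printing Implicit Defensive.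
Import Order.TTheory GRing.Theory Num.Theory.
Local Open Scope ring_scope.

(* Precomposing with the adjacent transposition (i i+1) maps the permutations
   with s(i) = j bijectively onto those with s(i+1) = j, and changes f(s) only
   through the pair of positions i, i+1, namely by g(s(i+1)) with
   g(k) = a_{kj} - a_{jk}.  Summed over the s with s(i) = j, the value of
   g(s(p)) does not depend on the position p <> i; summing over all n-1 such p
   instead gives (n-1)! times the sum of g(k) over k <> j. *)

Lemma ltn_tperm_succ n (i i1 p q : 'I_n) : i1 = i.+1 :> nat ->
  (tperm i i1 p < tperm i i1 q)%N =
  (p < q)%N (+) ((p == i) && (q == i1) || (p == i1) && (q == i)).
Proof.
move=> hi1; rewrite -!(inj_eq val_inj) /=.
case: tpermP => [->|->|/eqP + /eqP]; case: tpermP => [->|->|/eqP + /eqP];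
  rewrite -?(inj_eq val_inj) ?eqxx /=; lia.
Qed.

Lemma lop_obj_pairE (R : pzRingType) n (A : 'M[R]_n) (s : 'S_n) :
  lop_obj A s = \sum_(pq : 'I_n * 'I_n | (pq.1 < pq.2)%N) A (s pq.1) (s pq.2).
Proof. exact: pair_big_dep. Qed.

Lemma lop_obj_tperm_succ (R : pzRingType) n (A : 'M[R]_n) (i i1 : 'I_n)
    (s : 'S_n) : i1 = i.+1 :> nat ->
  lop_obj A (tperm i i1 * s)%g = lop_obj A s - A (s i) (s i1) + A (s i1) (s i).
Proof.
move=> hi1; set t := tperm i i1.
have tt_inv : involutive (fun pq : 'I_n * 'I_n => (t pq.1, t pq.2)).
  by case=> p q; rewrite /= !tpermK.
rewrite !lop_obj_pairE (reindex_inj (inv_inj tt_inv)) /=.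
under eq_bigr do rewrite !permM !tpermK.
rewrite (bigD1 (i1, i)) /=; last by rewrite /t tpermL tpermR hi1.
rewrite [in RHS](bigD1 (i, i1)) /=; last by rewrite hi1.
have ltn_pair_tperm (pq : 'I_n * 'I_n) :
    (t pq.1 < t pq.2)%N && (pq != (i1, i)) = (pq.1 < pq.2)%N && (pq != (i, i1)).
  case: pq => p q; rewrite /= /t ltn_tperm_succ // !xpair_eqE.
  rewrite -!(inj_eq val_inj) /=; lia.
by rewrite (eq_bigl _ _ ltn_pair_tperm) [A (s i) (s i1) + _]addrC addrK addrC.
Qed.

Lemma sum_lop_obj_sending_succ (R : pzRingType) n (A : 'M[R]_n) (i i1 j : 'I_n) :
  i1 = i.+1 :> nat ->
  \sum_(s : 'S_n | s i1 == j) lop_obj A s - \sum_(s : 'S_n | s i == j) lop_obj A s =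
  \sum_(s : 'S_n | s i == j) (A (s i1) j - A j (s i1)).
Proof.
move=> hi1; rewrite (reindex_inj (mulgI (tperm i i1))) /=.
under eq_bigl => s do rewrite permM tpermR.
rewrite -sumrB; apply: eq_bigr => s /eqP s_i.
by rewrite lop_obj_tperm_succ // s_i addrC !addrA addNr add0r addrC.
Qed.

Lemma perm_on_setC1 (T : finType) (x : T) (s : {perm T}) :
  perm_on [set~ x] s = (s x == x).
Proof.
apply/subsetP/eqP => [s_on | sx y]; last first.
  by rewrite !inE; apply: contra => /eqP ->; apply/eqP.
by apply/eqP; apply: contraT => /s_on; rewrite !inE eqxx.
Qed.

Lemma card_perm_sending n (i j : 'I_n) : #|[pred s : 'S_n | s i == j]| = n.-1`!.
Proof.
rewrite -sum1_card (reindex_inj (mulIg (tperm i j))) /=.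
under eq_bigl => s do
  rewrite inE permM -[X in _ == X](tpermL i j) (inj_eq perm_inj).
rewrite sum1_card -[in RHS](card_ord n) -(cardsC1 i) -card_perm.
by apply: eq_card => s; exact/esym/perm_on_setC1.
Qed.

Lemma sum_perm_sending_eval_indep (V : nmodType) n (i j p q : 'I_n)
    (g : 'I_n -> V) : p != i -> q != i ->
  \sum_(s : 'S_n | s i == j) g (s p) = \sum_(s : 'S_n | s i == j) g (s q).
Proof.
move=> p_i q_i; rewrite (reindex_inj (mulgI (tperm p q))) /=.
by apply: eq_big => [s|s _]; rewrite permM ?tpermL ?tpermD.
Qed.

Lemma sum_perm_sending_eval (V : nmodType) n (i j p : 'I_n) (g : 'I_n -> V) :
  p != i ->
  (\sum_(s : 'S_n | s i == j) g (s p)) *+ n.-1 =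
  (\sum_(k < n | k != j) g k) *+ n.-1`!.
Proof.
move=> p_i.
transitivity (\sum_(q < n | q != i) \sum_(s : 'S_n | s i == j) g (s q)).
  have <- : #|predC1 i| = n.-1 by rewrite cardC1 card_ord.
  rewrite -sumr_const.
  by apply: eq_bigr => q; apply: sum_perm_sending_eval_indep.
rewrite exchange_big /= -(card_perm_sending i j) -sumr_const.
apply: eq_bigr => s /eqP s_i.
rewrite [RHS](reindex_inj (@perm_inj _ s)) /=.
by apply: eq_bigl => q; rewrite -s_i (inj_eq perm_inj).
Qed.

Theorem proposition9 (R : realFieldType) (n : nat) (A : 'M[R]_n)
  (hn : (2 <= n)%N)
  (hdiag : forall k : 'I_n, A k k = 0)
  (i i1 : 'I_n) (hi1 : nat_of_ord i1 = i.+1) (j : 'I_n) :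
  mu A i1 j - mu A i j =
    (n.-1%:R)^-1 * \sum_(k < n | k != j) (A k j - A j k).
Proof.
have i1_i : i1 != i by rewrite -val_eqE /= hi1; lia.
have n1_neq0 : n.-1%:R != 0 :> R by rewrite pnatr_eq0 -lt0n -subn1 subn_gt0.
have fact_neq0 : n.-1`!%:R != 0 :> R by rewrite pnatr_eq0 -lt0n fact_gt0.
have := sum_perm_sending_eval j (fun k => A k j - A j k) i1_i.
rewrite -[LHS]mulr_natr -[RHS]mulr_natr => sum_eval.
rewrite /mu -mulrBr sum_lop_obj_sending_succ //.
rewrite -[X in _ * X](mulfK n1_neq0) sum_eval.
by rewrite mulrA mulrCA mulVf // mulr1 mulrC.
Qed.
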